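(* Consider the symmetric two-user channel $a=c>0$, $b=d>0$, with $P_{\max}>0$. If $$b\ge\frac{\sqrt{1+aP_{\max}}}{P_{\max}},$$ then operating via TDM is optimal: the convex hull of the power-control rate region equals the triangle with vertices $(0,0)$, $(0,\log_2(1+aP_{\max}))$ and $(\log_2(1+aP_{\max}),0)$.
   Context: This is the two-user interference channel with interference treated as noise. The rates are $R_1(P_1,P_2)=\log_2\!\left(1+\frac{aP_1}{1+bP_2}\right)$ and $R_2(P_1,P_2)=\log_2\!\left(1+\frac{cP_2}{1+dP_1}\right)$, with $P_1,P_2\in[0,P_{\max}]$. The gains are normalized by the noise variance: $a,c$ are direct gains and $b,d$ are interference gains. The power-control rate region is $\{(r_1,r_2)\in\mathbb R^2_{\ge0}: \exists (P_1,P_2)\in[0,P_{\max}]^2,\ r_1\le R_1(P_1,P_2),\ r_2\le R_2(P_1,P_2)\}$. *)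

From Stdlib Require Import Reals Lra.
Open Scope R_scope.

Definition log2 (x : R) : R := ln x / ln 2.

(* Rates with interference treated as noise. *)
Definition R1 (a b P1 P2 : R) : R := log2 (1 + a * P1 / (1 + b * P2)).
Definition R2 (c d P1 P2 : R) : R := log2 (1 + c * P2 / (1 + d * P1)).

Definition rate_region (a b c d Pmax : R) (r : R * R) : Prop :=
  0 <= fst r /\ 0 <= snd r /\
  exists P1 P2, 0 <= P1 <= Pmax /\ 0 <= P2 <= Pmax /\
    fst r <= R1 a b P1 P2 /\ snd r <= R2 c d P1 P2.

Definition convex (C : R * R -> Prop) : Prop :=
  forall x y t, C x -> C y -> 0 <= t <= 1 ->
    C (t * fst x + (1 - t) * fst y, t * snd x + (1 - t) * snd y).

Definition conv_hull (S : R * R -> Prop) (p : R * R) : Prop :=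
  forall C, convex C -> (forall q, S q -> C q) -> C p.

Definition closed_triangle (u v w : R * R) : R * R -> Prop :=
  conv_hull (fun q => q = u \/ q = v \/ q = w).

From Pilot Require Import Defs.
From Stdlib Require Import Reals Lra Psatz.
Open Scope R_scope.

(* Write L = log2 (1 + a Pmax).  With interference treated as
   noise, the threshold b >= sqrt (1 + a Pmax) / Pmax, i.e.
   b^2 Pmax^2 >= 1 + a Pmax, forces R1 + R2 <= L at every admissible power
   pair: after clearing denominators this is the nonnegativity on the square
   [0,Pmax]^2 of a quadratic "deficit" which is the bilinear interpolation of
   its corner values (all >= 0) plus two concave terms vanishing on the
   boundary.  Hence the rate region lies in the convex set
   { r >= 0, r1 + r2 <= L }, and so does its convex hull.  Conversely the
   three vertices (0,0), (0,L), (L,0) are achieved (both users silent, or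
   one user at full power alone). *)

Lemma ln2_pos : 0 < ln 2.
Proof. rewrite <- ln_1; apply ln_increasing; lra. Qed.

Lemma log2_1 : log2 1 = 0.
Proof. unfold log2; rewrite ln_1; unfold Rdiv; ring. Qed.

Lemma log2_pos x : 1 < x -> 0 < log2 x.
Proof.
  intros Hx; unfold log2; apply Rdiv_lt_0_compat; [|exact ln2_pos].
  rewrite <- ln_1; apply ln_increasing; lra.
Qed.

Lemma log2_le x y : 0 < x -> x <= y -> log2 x <= log2 y.
Proof.
  intros Hx Hxy; unfold log2, Rdiv.
  apply Rmult_le_compat_r; [left; apply Rinv_0_lt_compat, ln2_pos|].
  destruct Hxy as [Hlt|<-]; [left; apply ln_increasing|]; lra.
Qed.

Lemma log2_mult x y : 0 < x -> 0 < y -> log2 (x * y) = log2 x + log2 y.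
Proof. intros Hx Hy; unfold log2; rewrite ln_mult by assumption; field; apply Rgt_not_eq, ln2_pos. Qed.

Lemma threshold_squared a b M :
  0 < M -> b >= sqrt (1 + a * M) / M -> 0 <= 1 + a * M ->
  b * b * M * M >= 1 + a * M.
Proof.
  intros HM Hb Hnn.
  assert (HbM : sqrt (1 + a * M) <= b * M).
  { apply Rmult_le_reg_r with (/ M); [apply Rinv_0_lt_compat; lra|].
    rewrite Rmult_assoc, Rinv_r by lra; lra. }
  pose proof (sqrt_pos (1 + a * M)).
  pose proof (sqrt_sqrt (1 + a * M) Hnn).
  nra.
Qed.

(* The sum-rate deficit: (1+bx)(1+by)(1+aM) minus the product of the
   numerators of the two SINR terms equals a times this quantity. *)
Definition deficit (a b M x y : R) : R :=
  M * (1 + b * x) * (1 + b * y) - x - y - b * x * x - b * y * y - a * x * y.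

(* On the square [0,M]^2 the deficit is nonnegative: it is the bilinear
   interpolation of its corner values M, 0, 0, M (b^2 M^2 - 1 - a M) plus the
   concave terms b x (M - x) and b y (M - y). *)
Lemma deficit_nonneg a b M x y :
  0 < b -> 0 < M -> b * b * M * M >= 1 + a * M ->
  0 <= x <= M -> 0 <= y <= M -> 0 <= deficit a b M x y.
Proof.
  intros Hb HM Hth Hx Hy.
  assert (Interp : M * M * deficit a b M x y =
      (M - x) * (M - y) * M + x * y * (M * (b * b * M * M - 1 - a * M))
      + M * M * b * y * (M - y) + M * M * b * x * (M - x))
    by (unfold deficit; ring).
  assert (0 <= M * M * deficit a b M x y).
  { rewrite Interp.
    repeat apply Rplus_le_le_0_compat; repeat apply Rmult_le_pos; lra. }
  apply Rmult_le_reg_l with (M * M); nra.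
Qed.

Lemma sinr_fraction a b P Q :
  0 <= Q -> 0 < b -> 1 + a * P / (1 + b * Q) = (1 + b * Q + a * P) / (1 + b * Q).
Proof. intros HQ Hb; field; nra. Qed.

Lemma sum_rate_bound a b M P1 P2 :
  0 < a -> 0 < b -> 0 < M -> b * b * M * M >= 1 + a * M ->
  0 <= P1 <= M -> 0 <= P2 <= M ->
  Defs.R1 a b P1 P2 + Defs.R2 a b P1 P2 <= log2 (1 + a * M).
Proof.
  intros Ha Hb HM Hth H1 H2.
  unfold Defs.R1, Defs.R2; rewrite !sinr_fraction by lra.
  set (D1 := 1 + b * P1); set (D2 := 1 + b * P2).
  assert (HD1 : 0 < D1) by (unfold D1; nra).
  assert (HD2 : 0 < D2) by (unfold D2; nra).
  assert (HN1 : 0 < D2 + a * P1) by (unfold D2; nra).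
  assert (HN2 : 0 < D1 + a * P2) by (unfold D1; nra).
  rewrite <- log2_mult by (apply Rdiv_lt_0_compat; assumption).
  apply log2_le; [apply Rmult_lt_0_compat; apply Rdiv_lt_0_compat; assumption|].
  pose proof (deficit_nonneg a b M P1 P2 Hb HM Hth H1 H2) as Hdef.
  assert (Gap : (1 + a * M) * (D1 * D2) - (D2 + a * P1) * (D1 + a * P2)
                = a * deficit a b M P1 P2) by (unfold D1, D2, deficit; ring).
  replace ((D2 + a * P1) / D2 * ((D1 + a * P2) / D1))
    with ((D2 + a * P1) * (D1 + a * P2) / (D1 * D2)) by (field; lra).
  apply Rmult_le_reg_r with (D1 * D2); [nra|].
  unfold Rdiv; rewrite Rmult_assoc, Rinv_l by nra.
  nra.
Qed.

Lemma conv_hull_least (S C : R * R -> Prop) :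
  convex C -> (forall q, S q -> C q) -> forall p, conv_hull S p -> C p.
Proof. intros HC HS p Hp; exact (Hp C HC HS). Qed.

Lemma conv_hull_convex (S : R * R -> Prop) : convex (conv_hull S).
Proof. intros x y t Hx Hy Ht C HC HS; apply HC; [apply Hx|apply Hy|]; assumption. Qed.

Lemma conv_hull_incl (S : R * R -> Prop) q : S q -> conv_hull S q.
Proof. intros Hq C _ HS; exact (HS q Hq). Qed.

Lemma conv_hull_sub (S T : R * R -> Prop) :
  (forall q, S q -> conv_hull T q) -> forall p, conv_hull S p -> conv_hull T p.
Proof. intros HST; apply conv_hull_least; [apply conv_hull_convex|exact HST]. Qed.

Definition simplex (L : R) (p : R * R) : Prop :=
  0 <= fst p /\ 0 <= snd p /\ fst p + snd p <= L.

Lemma simplex_convex L : convex (simplex L).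
Proof. intros [x1 x2] [y1 y2] t (? & ? & ?) (? & ? & ?) Ht; unfold simplex; simpl in *; repeat split; nra. Qed.

(* A point of the simplex is a convex combination of the vertices: first of
   (L,0) and (0,L) to reach the hypotenuse, then with (0,0). *)
Lemma simplex_in_convex L (C : R * R -> Prop) p :
  0 < L -> convex C -> C (0, 0) -> C (0, L) -> C (L, 0) ->
  simplex L p -> C p.
Proof.
  intros HL HC C0 C1 C2; destruct p as [r1 r2]; intros (H1 & H2 & H3); simpl in *.
  destruct (Req_dec (r1 + r2) 0) as [Hs0|Hs0].
  { replace (r1, r2) with (0, 0) by (f_equal; lra); exact C0. }
  set (s := r1 + r2).
  assert (Hs : 0 < s) by (unfold s; lra).
  assert (Hypot : C (r1 / s * L, r2 / s * L)).
  { pose proof (HC (L, 0) (0, L) (r1 / s) C2 C1) as K; simpl in K.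
    replace (r1 / s * L, r2 / s * L)
      with (r1 / s * L + (1 - r1 / s) * 0, r1 / s * 0 + (1 - r1 / s) * L)
      by (f_equal; unfold s; field; lra).
    apply K; split; [apply Rle_mult_inv_pos; lra|].
    apply Rmult_le_reg_r with s; [exact Hs|].
    unfold Rdiv; rewrite Rmult_assoc, Rinv_l by lra; unfold s; lra. }
  pose proof (HC _ _ (s / L) Hypot C0) as K; simpl in K.
  replace (r1, r2)
    with (s / L * (r1 / s * L) + (1 - s / L) * 0, s / L * (r2 / s * L) + (1 - s / L) * 0)
    by (f_equal; field; lra).
  apply K; split; [apply Rle_mult_inv_pos; lra|].
  apply Rmult_le_reg_r with L; [exact HL|].
  unfold Rdiv; rewrite Rmult_assoc, Rinv_l by lra; unfold s; lra.
Qed.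

Lemma vertices_achievable a b Pmax q :
  0 < a -> 0 < b -> 0 < Pmax ->
  (q = (0, 0) \/ q = (0, log2 (1 + a * Pmax)) \/ q = (log2 (1 + a * Pmax), 0)) ->
  rate_region a b a b Pmax q.
Proof.
  intros Ha Hb HM Hq.
  assert (Silent : forall P, 0 <= P -> 1 + a * 0 / (1 + b * P) = 1)
    by (intros P HP; field; nra).
  assert (Alone : 1 + a * Pmax / (1 + b * 0) = 1 + a * Pmax) by field.
  assert (HL : 0 < log2 (1 + a * Pmax)) by (apply log2_pos; nra).
  unfold rate_region, Defs.R1, Defs.R2.
  destruct Hq as [-> | [-> | ->]]; simpl.
  - repeat split; try lra; exists 0, 0; rewrite Silent, log2_1 by lra; lra.
  - repeat split; try lra; exists 0, Pmax; rewrite Silent, Alone, log2_1 by lra; lra.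
  - repeat split; try lra; exists Pmax, 0; rewrite Silent, Alone, log2_1 by lra; lra.
Qed.

Theorem corollary3 (a b Pmax : R) :
  0 < a -> 0 < b -> 0 < Pmax ->
  b >= sqrt (1 + a * Pmax) / Pmax ->
  forall r : R * R,
    conv_hull (rate_region a b a b Pmax) r <->
    closed_triangle ((0:R), (0:R)) ((0:R), log2 (1 + a * Pmax)) (log2 (1 + a * Pmax), (0:R)) r.
Proof.
  intros Ha Hb HM Hbb r.
  assert (Hth : b * b * Pmax * Pmax >= 1 + a * Pmax)
    by (apply threshold_squared; nra).
  assert (HL : 0 < log2 (1 + a * Pmax)) by (apply log2_pos; nra).
  split.
  - intros Hr.
    assert (Hsimplex : simplex (log2 (1 + a * Pmax)) r).
    { apply (conv_hull_least (rate_region a b a b Pmax) _ (simplex_convex _)); [|exact Hr].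
      intros q (Hq1 & Hq2 & P1 & P2 & HP1 & HP2 & Hr1 & Hr2).
      pose proof (sum_rate_bound a b Pmax P1 P2 Ha Hb HM Hth HP1 HP2).
      unfold simplex; lra. }
    intros C HC Hv.
    apply (simplex_in_convex (log2 (1 + a * Pmax))); auto.
  - apply conv_hull_sub; intros q Hq.
    apply conv_hull_incl, vertices_achievable; assumption.
Qed.
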